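(* Let $R$ be a ring and $n$ a positive integer such that every proper ideal of $R$ is a weakly $n$-absorbing ideal of $R$. Then: (1) $\dim(R)=0$; (2) $R$ has at most $n+1$ prime ideals that are pairwise comaximal; in particular, $R$ has at most $n+1$ maximal ideals.
   Context: All rings are commutative with $1\neq0$. A proper ideal $I$ of $R$ is weakly $n$-absorbing if whenever $0\neq a_1\cdots a_{n+1}\in I$ with $a_1,\dots,a_{n+1}\in R$, there are $n$ of the $a_i$'s whose product is in $I$. $\dim(R)$ is the Krull dimension. *)

From mathcomp Require Import all_boot all_order all_algebra.
Set Implicit Arguments. Unset Strict Implicit. Unset Printing Implicit Defensive.
Import GRing.Theory.
Local Open Scope ring_scope.

Section Ideals.
Variable R : comNzRingType.

Definition wn_is_ideal (I : R -> Prop) : Prop :=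
  [/\ I 0, (forall x y, I x -> I y -> I (x + y)),
      (forall x, I x -> I (- x)) & (forall r x, I x -> I (r * x))].

Definition wn_proper_ideal (I : R -> Prop) : Prop := wn_is_ideal I /\ ~ I 1.

Definition subset_ideal (I J : R -> Prop) : Prop := forall x, I x -> J x.

Definition wn_prime_ideal (P : R -> Prop) : Prop :=
  wn_proper_ideal P /\ (forall a b, P (a * b) -> P a \/ P b).

Definition wn_maximal_ideal (M : R -> Prop) : Prop :=
  wn_proper_ideal M /\
  (forall J, wn_is_ideal J -> subset_ideal M J -> subset_ideal J M \/ J 1).

Definition comaximal (I J : R -> Prop) : Prop :=
  exists x y, I x /\ J y /\ x + y = 1.

Definition weakly_n_absorbing (n : nat) (I : R -> Prop) : Prop :=
  wn_proper_ideal I /\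
  forall a : 'I_n.+1 -> R,
    \prod_(i < n.+1) a i != 0 -> I (\prod_(i < n.+1) a i) ->
    exists j : 'I_n.+1, I (\prod_(i < n.+1 | i != j) a i).

(* Krull dimension 0: there is a prime ideal (a chain of length 0) and
   there is no chain P0 < P1 of prime ideals (no chain of length 1). *)
Definition krull_dim_zero : Prop :=
  (exists P, wn_prime_ideal P) /\
  (forall P Q, wn_prime_ideal P -> wn_prime_ideal Q ->
     subset_ideal P Q -> subset_ideal Q P).
End Ideals.

(** Weak n-absorption of principal ideals makes every element strongly
    π-regular ([x ^+ n.+1 \in R x ^+ n.+2]), and in such a ring a prime
    contained in another prime equals it: from [x ^+ k (1 - r x) = 0], either
    [x] or [1 - r x] lies in the smaller prime, and [1 - r x] cannot even lie
    in the bigger one, which contains [r x].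
    For the bound, pairwise comaximal primes [P_0, ..., P_(n+1)] admit
    elements [e_i \in P_i] outside every other [P_j]; then [e_0 ... e_n] is a
    nonzero element of [P_0 ∩ ... ∩ P_n] (it avoids [P_(n+1)]), while no
    product of [n] of its factors lies in that intersection. *)

From mathcomp Require Import all_boot all_algebra ring.
From mathcomp Require Import boolp classical_sets.
Set Implicit Arguments. Unset Strict Implicit. Unset Printing Implicit Defensive.
Import GRing.Theory.
Local Open Scope ring_scope.
Local Open Scope classical_set_scope.

Section Ideals.
Variable R : comNzRingType.
Implicit Types (I J M N P Q : set R) (x y r : R).

Lemma ideal0 I : wn_is_ideal I -> I 0.
Proof. by case. Qed.

Lemma idealD I x y : wn_is_ideal I -> I x -> I y -> I (x + y).
Proof. by case=> _ hD _ _; apply: hD. Qed.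

Lemma idealN I x : wn_is_ideal I -> I x -> I (- x).
Proof. by case=> _ _ hN _; apply: hN. Qed.

Lemma idealMl I r x : wn_is_ideal I -> I x -> I (r * x).
Proof. by case=> _ _ _ hM; apply: hM. Qed.

Lemma idealMr I r x : wn_is_ideal I -> I x -> I (x * r).
Proof. by rewrite mulrC; apply: idealMl. Qed.

Lemma proper_ideal_1B I x : wn_proper_ideal I -> I x -> ~ I (1 - x).
Proof.
by case=> hI I'1 Ix I1x; apply: I'1; rewrite -(subrK x 1); apply: idealD.
Qed.

Lemma prime_ideal_expr P x k : wn_prime_ideal P -> P (x ^+ k) -> P x.
Proof.
move=> [[_ P'1] Pmul]; elim: k => [//|k IHk].
by rewrite exprS => /Pmul [].
Qed.

Lemma prime_ideal_prod P (T : finType) (S : pred T) (F : T -> R) :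
  wn_prime_ideal P -> (forall i, S i -> ~ P (F i)) -> ~ P (\prod_(i | S i) F i).
Proof.
move=> [[_ P'1] Pmul] hF; apply: (big_ind (fun z => ~ P z)) => // a b Pa' Pb'.
by case/Pmul.
Qed.

Definition principal_ideal x : set R := fun z => exists s, z = s * x.

Definition ideal_add I J : set R := fun z => exists a b, [/\ I a, J b & z = a + b].

Lemma principal_ideal_ideal x : wn_is_ideal (principal_ideal x).
Proof.
split.
- by exists 0; rewrite mul0r.
- by move=> _ _ [s ->] [t ->]; exists (s + t); rewrite mulrDl.
- by move=> _ [s ->]; exists (- s); rewrite mulNr.
- by move=> r _ [s ->]; exists (r * s); rewrite mulrA.
Qed.

Lemma principal_ideal_proper x :
  ~ (exists y, y * x = 1) -> wn_proper_ideal (principal_ideal x).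
Proof.
move=> x_nonunit; split; first exact: principal_ideal_ideal.
by case=> s /esym s1; apply: x_nonunit; exists s.
Qed.

Lemma ideal_add_ideal I J :
  wn_is_ideal I -> wn_is_ideal J -> wn_is_ideal (ideal_add I J).
Proof.
move=> hI hJ; split.
- by exists 0, 0; split; rewrite ?addr0 //; apply: ideal0.
- move=> _ _ [a [b [Ia Jb ->]]] [a' [b' [Ia' Jb' ->]]].
  by exists (a + a'), (b + b'); split; [apply: idealD..|ring].
- move=> _ [a [b [Ia Jb ->]]].
  by exists (- a), (- b); split; [apply: idealN..|ring].
- move=> r _ [a [b [Ia Jb ->]]].
  by exists (r * a), (r * b); split; [apply: idealMl..|ring].
Qed.

Lemma ideal_add_subl I J : wn_is_ideal J -> I `<=` ideal_add I J.
Proof. by move=> hJ a Ia; exists a, 0; split; rewrite ?addr0 //; apply: ideal0. Qed.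

Lemma ideal_add_subr I J : wn_is_ideal I -> J `<=` ideal_add I J.
Proof. by move=> hI b Jb; exists 0, b; split; rewrite ?add0r //; apply: ideal0. Qed.

Lemma bigcap_proper_ideal (T : Type) (i0 : T) (P : T -> set R) :
  (forall i, wn_proper_ideal (P i)) -> wn_proper_ideal (\bigcap_i P i).
Proof.
move=> hP; split; last by move=> /(_ i0 I); apply: (hP i0).2.
split=> [i _|x y Px Py i _|x Px i _|r x Px i _]; have [hI _] := hP i.
- exact: ideal0.
- exact: idealD (Px i _) (Py i _).
- exact: idealN (Px i _).
- exact: idealMl (Px i _).
Qed.

Lemma maximal_ideal_prime M : wn_maximal_ideal M -> wn_prime_ideal M.
Proof.
move=> [[hM M'1] Mmax]; split=> // a b Mab.
have [Ma|Ma'] := pselect (M a); [by left|right].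
have hJ := ideal_add_ideal hM (principal_ideal_ideal a).
case: (Mmax _ hJ (ideal_add_subl (principal_ideal_ideal a))) => [JM|].
  by case: Ma'; apply/JM/ideal_add_subr => //; exists 1; rewrite mul1r.
case=> m [_ [Mm [s ->] /esym m_sa_1]].
rewrite -[b]mul1r -m_sa_1 mulrDl -mulrA.
by apply: idealD => //; [apply: idealMr|apply: idealMl].
Qed.

Lemma maximal_ideal_sub_eq M N :
  wn_maximal_ideal M -> wn_proper_ideal N -> M `<=` N -> N = M.
Proof.
move=> [_ Mmax] [hN N'1] MN; apply/seteqP; split=> //.
by case: (Mmax N hN MN).
Qed.

Lemma maximal_ideals_comaximal M N :
  wn_maximal_ideal M -> wn_maximal_ideal N -> M <> N -> comaximal M N.
Proof.
move=> hM hN M'N; have [[hMi _] Mmax] := hM; have [[hNi _] _] := hN.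
case: (Mmax _ (ideal_add_ideal hMi hNi) (ideal_add_subl hNi)) => [MN_M|].
  have NM : N `<=` M := subset_trans (ideal_add_subr hMi) MN_M.
  by case: M'N; apply: maximal_ideal_sub_eq hN hM.1 NM.
by case=> x [y [Mx Ny /esym xy1]]; exists x, y.
Qed.

Lemma bigcup_chain_proper_ideal (F : set (set R)) X :
  total_on F subset -> (forall Y x, F Y -> Y x -> wn_proper_ideal Y) ->
  F X -> wn_proper_ideal X -> wn_proper_ideal (\bigcup_(Y in F) Y).
Proof.
move=> Ftot hF FX hX; split; last by case=> Y FY Y1; apply: (hF _ _ FY Y1).2.
split.
- exact: bigcup_sup FX _ (ideal0 hX.1).
- move=> x y [X' FX' Xx] [Y FY Yy]; case: (Ftot _ _ FX' FY) => [X'Y|YX'].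
    exact: bigcup_sup FY _ (idealD (hF _ _ FY Yy).1 (X'Y _ Xx) Yy).
  exact: bigcup_sup FX' _ (idealD (hF _ _ FX' Xx).1 Xx (YX' _ Yy)).
- move=> x [Y FY Yx].
  exact: bigcup_sup FY _ (idealN (hF _ _ FY Yx).1 Yx).
- move=> r x [Y FY Yx].
  exact: bigcup_sup FY _ (idealMl r (hF _ _ FY Yx).1 Yx).
Qed.

Lemma exists_maximal_ideal : exists M, wn_maximal_ideal M.
Proof.
(* [set0] is admitted so that the union of the empty chain qualifies. *)
pose Z I := I = set0 \/ wn_proper_ideal I.
have Z_proper I x : Z I -> I x -> wn_proper_ideal I by case=> [-> //|].
have [|M [ZM Mmax]] := Zorn_bigcup (P := Z).
  move=> F FZ Ftot.
  have [[X [FX hX]]|noX] := pselect (exists X, F X /\ wn_proper_ideal X).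
    right; apply: (bigcup_chain_proper_ideal Ftot _ FX hX) => Y x /FZ.
    exact: Z_proper.
  left; apply/seteqP; split=> // x [X FX Xx].
  by case: noX; exists X; split; [|apply: (Z_proper _ x (FZ _ FX))].
have hM : wn_proper_ideal M.
  case: ZM => // M0.
  have h0 : wn_proper_ideal (principal_ideal 0).
    apply: principal_ideal_proper => -[y].
    by rewrite mulr0 => /eqP; rewrite eq_sym oner_eq0.
  case: (Mmax _ _ (or_intror h0)); rewrite M0; split=> // /(_ 0).
  by apply; exists 0; rewrite mulr0.
exists M; split=> // J hJ MJ; have [J1|J'1] := pselect (J 1); [by right|left].
by apply: contrapT => J'M; apply: (Mmax J); [split|right].
Qed.

Lemma comaximal_separating (T : finType) (P : T -> set R) :
  (forall i, wn_proper_ideal (P i)) ->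
  (forall i j, i != j -> comaximal (P i) (P j)) ->
  exists e : T -> R, forall i, P i (e i) /\ forall j, i != j -> ~ P j (e i).
Proof.
move=> hP hC.
have /choice[x hx] : forall ij : T * T,
    exists y, ij.1 != ij.2 -> P ij.2 y /\ P ij.1 (1 - y).
  case=> i j /=; have [ij|_] := boolP (i != j); last by exists 0.
  have [a [b [Pja [Pib ab1]]]] : comaximal (P j) (P i).
    by apply: hC; rewrite eq_sym.
  by exists a => _; rewrite -ab1 [a + b]addrC addrK.
exists (fun i => 1 - \prod_(j | j != i) x (i, j)) => i; split=> [|j ij].
  have [hI _] := hP i.
  apply: (big_ind (fun z => P i (1 - z))) => [|u v Pu Pv|j ji].
  - by rewrite subrr; apply: ideal0.
  - have -> : 1 - u * v = (1 - u) + u * (1 - v) by ring.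
    by apply: idealD => //; apply: idealMl.
  - by rewrite eq_sym in ji; case: (hx (i, j) ji).
apply: proper_ideal_1B (hP j) _; rewrite (bigD1 j) 1?eq_sym //=.
exact: idealMr (hP j).1 (hx (i, j) ij).1.
Qed.

Lemma bigcap_primes_not_weakly_absorbing n (P : 'I_n.+1 -> set R) Q
    (e : 'I_n.+1 -> R) :
  (forall i, wn_prime_ideal (P i)) -> wn_prime_ideal Q ->
  (forall i, P i (e i)) -> (forall i j, i != j -> ~ P j (e i)) ->
  (forall i, ~ Q (e i)) ->
  ~ weakly_n_absorbing n (\bigcap_i P i).
Proof.
move=> hP hQ Pe P'e Q'e [_ absorb].
have e_cap : (\bigcap_i P i) (\prod_i e i).
  by move=> i _; rewrite (bigD1 i) //=; apply: idealMr (hP i).1.1 (Pe i).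
have e_neq0 : \prod_i e i != 0.
  apply/eqP => e0; apply: (prime_ideal_prod hQ (S := predT) (fun i _ => Q'e i)).
  by rewrite e0; apply: ideal0 hQ.1.1.
have [j] := absorb e e_neq0 e_cap.
by move/(_ j I); apply: prime_ideal_prod (hP j) _ => i; apply: P'e.
Qed.

Definition strongly_pi_regular := forall x : R, exists k r, x ^+ k = r * x ^+ k.+1.

Lemma strongly_pi_regular_prime_sub P Q :
  strongly_pi_regular -> wn_prime_ideal P -> wn_prime_ideal Q ->
  P `<=` Q -> Q `<=` P.
Proof.
move=> piR hP hQ PQ x Qx; have [k [r xk]] := piR x.
have : P (x ^+ k * (1 - r * x)).
  by rewrite mulrBr mulr1 mulrCA -exprSr -xk subrr; apply: ideal0 hP.1.1.
case/hP.2 => [/(prime_ideal_expr hP) //|/PQ].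
by move/(proper_ideal_1B hQ.1 (idealMl r hQ.1.1 Qx)).
Qed.

End Ideals.

Section WeaklyAbsorbing.
Variables (R : comNzRingType) (n : nat).
Hypothesis absorbing : forall I : set R, wn_proper_ideal I -> weakly_n_absorbing n I.

Lemma weakly_absorbing_expr (x : R) : exists r, x ^+ n.+1 = r * x ^+ n.+2.
Proof.
have [[y yx1]|x_nonunit] := pselect (exists y, y * x = 1).
  by exists y; rewrite [x ^+ n.+2]exprS mulrA yx1 mul1r.
have [xn0|xn_neq0] := eqVneq (x ^+ n.+1) 0; first by exists 0; rewrite xn0 mul0r.
have hI : wn_proper_ideal (principal_ideal (x ^+ n.+1)).
  apply: principal_ideal_proper => -[y yxn1]; apply: x_nonunit.
  by exists (y * x ^+ n); rewrite -mulrA -exprSr yxn1.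
have [_ absorb] := absorbing hI.
have [j [s xn]] : exists j : 'I_n.+1,
    principal_ideal (x ^+ n.+1) (\prod_(i < n.+1 | i != j) (fun _ => x) i).
  by apply: absorb; rewrite prodr_const card_ord //; exists 1; rewrite mul1r.
have {}xn : x ^+ n = s * x ^+ n.+1 by rewrite -xn prodr_const cardC1 card_ord.
by exists s; rewrite exprS xn mulrCA -exprS.
Qed.

Lemma weakly_absorbing_strongly_pi_regular : strongly_pi_regular R.
Proof. by move=> x; have [r xn] := weakly_absorbing_expr x; exists n.+1, r. Qed.

Lemma comaximal_primes_card m (P : 'I_m -> set R) :
  (forall i, wn_prime_ideal (P i)) ->
  (forall i j, i != j -> comaximal (P i) (P j)) -> (m <= n.+1)%N.
Proof.
move=> hP hC; rewrite leqNgt; apply/negP => n1_lt_m.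
have [e he] := comaximal_separating (fun i => (hP i).1) hC.
pose w (t : 'I_n.+1) : 'I_m := widen_ord (ltnW n1_lt_m) t.
have w_neq_last t : w t != Ordinal n1_lt_m by rewrite -val_eqE /= neq_ltn ltn_ord.
pose last_ideal := P (Ordinal n1_lt_m).
apply: (bigcap_primes_not_weakly_absorbing (P := P \o w) (Q := last_ideal)
  (e := e \o w)) => [i||i|i j ij|i|] /=.
- exact: hP.
- exact: hP.
- exact: (he _).1.
- by apply: (he _).2; rewrite -val_eqE.
- by apply: (he _).2; rewrite w_neq_last.
- exact/absorbing/bigcap_proper_ideal/(fun i => (hP (w i)).1)/ord0.
Qed.

End WeaklyAbsorbing.

Theorem mainTheorem7 (R : comNzRingType) (n : nat) (hn : (0 < n)%N)
  (H : forall I : R -> Prop, @wn_proper_ideal R I -> @weakly_n_absorbing R n I) :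
  krull_dim_zero R /\
  (forall (m : nat) (P : 'I_m -> R -> Prop),
      (forall i, wn_prime_ideal (P i)) ->
      (forall i j, i != j -> comaximal (P i) (P j)) ->
      (m <= n.+1)%N) /\
  (forall (m : nat) (M : 'I_m -> R -> Prop),
      (forall i, wn_maximal_ideal (M i)) -> injective M ->
      (m <= n.+1)%N).
Proof.
have piR := weakly_absorbing_strongly_pi_regular H.
split; [split|split].
- by have [M hM] := exists_maximal_ideal R; exists M; apply: maximal_ideal_prime.
- by move=> P Q hP hQ; apply: strongly_pi_regular_prime_sub.
- exact: comaximal_primes_card.
- move=> m M hM M_inj; apply: (comaximal_primes_card H (P := M)) => [i|i j ij].
    exact: maximal_ideal_prime.
  by apply: maximal_ideals_comaximal => // /M_inj/eqP; apply/negP.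
Qed.
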